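(* Let $\mathbb{A}$ be a 2-category and $p:e\to b$ a 1-cell such that $\mathbb{A}$ has the two-dimensional cokernel diagram of $p$, a right Kan extension $(t,\gamma)$ of $p$ along $p$ exists, and it is preserved by $\delta^0:b\to b\uparrow_pb$. Let $\ell:b\uparrow_pb\to b$ be the unique 1-cell with $\ell\delta^0=\mathrm{id}_b$, $\ell\delta^1=t$, $\mathrm{id}_\ell\ast\alpha=\gamma$; then $\ell\dashv\delta^0$ with counit $\mathrm{id}_{\mathrm{id}_b}$, and let $\bar\eta:\mathrm{id}_{b\uparrow_pb}\Rightarrow\delta^0\ell$ be the unit of this adjunction. Then there exist a 1-cell $\bar\ell:b\uparrow_pb\uparrow_pb\to b$ and a 2-cell $\bar{\bar\eta}:\mathrm{id}_{b\uparrow_pb\uparrow_pb}\Rightarrow D^0\delta^0\bar\ell$ such that $\bar\ell\dashv D^0\delta^0$ is an adjunction with counit $\mathrm{id}_{\mathrm{id}_b}$ and unit $\bar{\bar\eta}$, and $$\bar\ell D^2=t\ell,\qquad \bar\ell D^0=\ell,\qquad \bar{\bar\eta}\ast\mathrm{id}_{D^0}=\mathrm{id}_{D^0}\ast\bar\eta .$$ Furthermore $\bar{\bar\eta}\ast\mathrm{id}_{D^2}$ equals the 2-cell $\bar{\bar\eta}_2:=(\mathrm{id}_{D^0}\ast\bar\eta\ast\mathrm{id}_{\delta^1\ell})\cdot(\mathrm{id}_{D^2}\ast\bar\eta): D^2\Rightarrow D^2\delta^0\ell=D^0\delta^1\ell\Rightarrow D^0\delta^0\ell\delta^1\ell=D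^0\delta^0t\ell$.
   Context: A 2-category is a $\mathbf{Cat}$-enriched category; composition of 1-cells is juxtaposition, vertical composition of 2-cells is $\cdot$, horizontal composition is $\ast$, $\mathrm{id}_f$ is the identity 2-cell on $f$. An adjunction $l\dashv r$ with counit $\varepsilon:lr\Rightarrow\mathrm{id}$ and unit $\eta:\mathrm{id}\Rightarrow rl$ satisfies the triangle identities. Opcomma object of $p$ along itself: an object $b\uparrow_p b$ with 1-cells $\delta^0,\delta^1:b\to b\uparrow_p b$ and a 2-cell $\alpha:\delta^1p\Rightarrow\delta^0p$ such that for every object $y$ the functor $h\mapsto(h\delta^0,h\delta^1,\mathrm{id}_h\ast\alpha)$, $\xi\mapsto(\xi\ast\mathrm{id}_{\delta^0},\xi\ast\mathrm{id}_{\delta^1})$ is an isomorphism from $\mathbb{A}(b\uparrow_p b,y)$ onto the category of triples $(h_0,h_1:b\to y,\ \beta:h_1p\Rightarrow h_0p)$ with morphisms pairs of 2-cells $(\xi_0:h_0\Rightarrow h_0',\xi_1:h_1\Rightarrow h_1')$ satisfying $(\xi_0\ast\mathrm{id}_p)\cdot\beta=\beta'\cdot(\xi_1\ast\mathrm{id}_p)$. Two-dimensional pushout of a span $f_0:c\to c_0$, $f_1:c\to c_1$: an object $P$ with $q_0:c_0\to P$, $q_1:c_1\to P$, $q_0f_0=q_1f_1$, such that for every $y$, $k\mapsto(kq_0,kq_1)$ is an isomorphism from $\mathbb{A}(P,y)$ onto the category of pairs $(k_0,k_1)$ with $k_0f_0=k_1f_1$, whose morphisms are pairs of 2-cells $(\xi_0,\xi_1)$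 with $\xi_0\ast\mathrm{id}_{f_0}=\xi_1\ast\mathrm{id}_{f_1}$. $\mathbb{A}$ has the two-dimensional cokernel diagram of $p$ if it has an opcomma object $b\uparrow_p b$ of $p$ along itself and a two-dimensional pushout $b\uparrow_pb\uparrow_pb$ of the span $(\delta^0,\delta^1)$, with 1-cells $D^0,D^2:b\uparrow_pb\to b\uparrow_pb\uparrow_pb$ satisfying $D^2\delta^0=D^0\delta^1$. Right Kan extension of $f:z\to y$ along $g:z\to x$: a pair $(r:x\to y,\gamma:rg\Rightarrow f)$ such that for each $k:x\to y$, $\beta\mapsto\gamma\cdot(\beta\ast\mathrm{id}_g)$ is a bijection from 2-cells $k\Rightarrow r$ to 2-cells $kg\Rightarrow f$. A 1-cell $d:y\to y'$ preserves it if $(dr,\mathrm{id}_d\ast\gamma)$ is a right Kan extension of $df$ along $g$. *)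

(* A strict 2-category (= Cat-enriched category), presented "globularly":
   a type of objects, a type of 1-cells with source/target, a type of
   2-cells with domain/codomain 1-cells, and total composition operations
   whose axioms are required only on composable arguments.  This avoids
   transport along equalities of 1-cells (e.g. l delta0 = id_b). *)

Set Implicit Arguments.

Record TwoCat := {
  ob : Type;
  cell1 : Type;
  cell2 : Type;
  src : cell1 -> ob;
  tgt : cell1 -> ob;
  id1 : ob -> cell1;
  (* comp1 g f = g f (juxtaposition: first f, then g) *)
  comp1 : cell1 -> cell1 -> cell1;
  dom : cell2 -> cell1;
  cod : cell2 -> cell1;
  id2 : cell1 -> cell2;
  (* vcomp b a = b . a (first a, then b) *)
  vcomp : cell2 -> cell2 -> cell2;
  (* hcomp b a = b * a, a : f => f' (f,f' : x -> y), b : g => g' (g,g' : y -> z) *)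
  hcomp : cell2 -> cell2 -> cell2;

  src_id1 : forall a, src (id1 a) = a;
  tgt_id1 : forall a, tgt (id1 a) = a;
  src_comp1 : forall g f, src g = tgt f -> src (comp1 g f) = src f;
  tgt_comp1 : forall g f, src g = tgt f -> tgt (comp1 g f) = tgt g;
  comp1_assoc : forall h g f, src h = tgt g -> src g = tgt f ->
    comp1 h (comp1 g f) = comp1 (comp1 h g) f;
  comp1_id_l : forall f, comp1 (id1 (tgt f)) f = f;
  comp1_id_r : forall f, comp1 f (id1 (src f)) = f;

  src_dom_cod : forall a, src (dom a) = src (cod a);
  tgt_dom_cod : forall a, tgt (dom a) = tgt (cod a);
  dom_id2 : forall f, dom (id2 f) = f;
  cod_id2 : forall f, cod (id2 f) = f;
  dom_vcomp : forall b a, dom b = cod a -> dom (vcomp b a) = dom a;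
  cod_vcomp : forall b a, dom b = cod a -> cod (vcomp b a) = cod b;
  vcomp_assoc : forall c b a, dom c = cod b -> dom b = cod a ->
    vcomp c (vcomp b a) = vcomp (vcomp c b) a;
  vcomp_id_l : forall a, vcomp (id2 (cod a)) a = a;
  vcomp_id_r : forall a, vcomp a (id2 (dom a)) = a;

  dom_hcomp : forall b a, src (dom b) = tgt (dom a) ->
    dom (hcomp b a) = comp1 (dom b) (dom a);
  cod_hcomp : forall b a, src (dom b) = tgt (dom a) ->
    cod (hcomp b a) = comp1 (cod b) (cod a);
  hcomp_assoc : forall c b a, src (dom c) = tgt (dom b) ->
    src (dom b) = tgt (dom a) ->
    hcomp c (hcomp b a) = hcomp (hcomp c b) a;
  hcomp_id_l : forall a, hcomp (id2 (id1 (tgt (dom a)))) a = a;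
  hcomp_id_r : forall a, hcomp a (id2 (id1 (src (dom a)))) = a;
  hcomp_id2 : forall g f, src g = tgt f ->
    hcomp (id2 g) (id2 f) = id2 (comp1 g f);
  interchange : forall b' b a' a,
    dom b' = cod b -> dom a' = cod a -> src (dom b) = tgt (dom a) ->
    hcomp (vcomp b' b) (vcomp a' a) = vcomp (hcomp b' a') (hcomp b a)
}.

Arguments src {_} _.  Arguments tgt {_} _.  Arguments id1 {_} _.
Arguments comp1 {_} _ _.  Arguments dom {_} _.  Arguments cod {_} _.
Arguments id2 {_} _.  Arguments vcomp {_} _ _.  Arguments hcomp {_} _ _.

Section Defs.
Context {A : TwoCat}.

Definition hom1 (f : cell1 A) (x y : ob A) : Prop := src f = x /\ tgt f = y.
Definition hom2 (a : cell2 A) (f g : cell1 A) : Prop := dom a = f /\ cod a = g.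

(* Opcomma object (X, d0, d1, al : d1 p => d0 p) of p : e -> b along itself:
   for every y, the functor A(X,y) -> triples, h |-> (h d0, h d1, id_h * al),
   xi |-> (xi * id_d0, xi * id_d1), is an isomorphism of categories, i.e.
   bijective on objects and on each hom-set. *)
Definition is_opcomma (p : cell1 A) (e b X : ob A) (d0 d1 : cell1 A)
    (al : cell2 A) : Prop :=
  hom1 d0 b X /\ hom1 d1 b X /\ hom2 al (comp1 d1 p) (comp1 d0 p) /\
  forall y : ob A,
    (forall h0 h1 be, hom1 h0 b y -> hom1 h1 b y ->
       hom2 be (comp1 h1 p) (comp1 h0 p) ->
       exists! h, hom1 h X y /\ comp1 h d0 = h0 /\ comp1 h d1 = h1 /\
                  hcomp (id2 h) al = be) /\
    (forall h h' xi0 xi1, hom1 h X y -> hom1 h' X y ->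
       hom2 xi0 (comp1 h d0) (comp1 h' d0) ->
       hom2 xi1 (comp1 h d1) (comp1 h' d1) ->
       vcomp (hcomp xi0 (id2 p)) (hcomp (id2 h) al)
         = vcomp (hcomp (id2 h') al) (hcomp xi1 (id2 p)) ->
       exists! xi, hom2 xi h h' /\ hcomp xi (id2 d0) = xi0 /\
                   hcomp xi (id2 d1) = xi1).

Definition is_pushout2 (c c0 c1 : ob A) (f0 f1 : cell1 A) (P : ob A)
    (q0 q1 : cell1 A) : Prop :=
  hom1 q0 c0 P /\ hom1 q1 c1 P /\ comp1 q0 f0 = comp1 q1 f1 /\
  forall y : ob A,
    (forall k0 k1, hom1 k0 c0 y -> hom1 k1 c1 y -> comp1 k0 f0 = comp1 k1 f1 ->
       exists! k, hom1 k P y /\ comp1 k q0 = k0 /\ comp1 k q1 = k1) /\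
    (forall k k' xi0 xi1, hom1 k P y -> hom1 k' P y ->
       hom2 xi0 (comp1 k q0) (comp1 k' q0) ->
       hom2 xi1 (comp1 k q1) (comp1 k' q1) ->
       hcomp xi0 (id2 f0) = hcomp xi1 (id2 f1) ->
       exists! xi, hom2 xi k k' /\ hcomp xi (id2 q0) = xi0 /\
                   hcomp xi (id2 q1) = xi1).

Definition has_cokernel_diagram (p : cell1 A) (e b X : ob A)
    (d0 d1 : cell1 A) (al : cell2 A) (P : ob A) (D0 D2 : cell1 A) : Prop :=
  is_opcomma p e b X d0 d1 al /\ is_pushout2 b X X d0 d1 P D2 D0.

Definition is_rke (z x y : ob A) (f g r : cell1 A) (ga : cell2 A) : Prop :=
  hom1 r x y /\ hom2 ga (comp1 r g) f /\
  forall k, hom1 k x y ->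
    forall be', hom2 be' (comp1 k g) f ->
      exists! be, hom2 be k r /\ vcomp ga (hcomp be (id2 g)) = be'.

Definition preserves_rke (z x y y' : ob A) (f g r : cell1 A) (ga : cell2 A)
    (d : cell1 A) : Prop :=
  hom1 d y y' /\
  is_rke z x y' (comp1 d f) g (comp1 d r) (hcomp (id2 d) ga).

Definition is_adjunction (x y : ob A) (l r : cell1 A) (ep et : cell2 A) : Prop :=
  hom1 l x y /\ hom1 r y x /\
  hom2 ep (comp1 l r) (id1 y) /\ hom2 et (id1 x) (comp1 r l) /\
  vcomp (hcomp ep (id2 l)) (hcomp (id2 l) et) = id2 l /\
  vcomp (hcomp (id2 r) ep) (hcomp et (id2 r)) = id2 r.

End Defs.

(* The unit [eta] of [l -| d0] is the opcomma-induced 2-cell with components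
   [id_{d0}] and [be : d1 => d0 t], the factorisation of [al] through the Kan
   extension [(d0 t, d0 ga)] preserved by [d0].  The triangle identity
   [l eta = id_l] holds because [ga . (l be * p) = l al = ga], so [l be] is the
   identity of [t] by the universal property of [(t, ga)].  On the pushout, [lb]
   glues [t l] and [l], and the new unit glues the 2-cell [eta2] of the statement
   on [D2] with [D0 eta] on [D0]; both triangle identities then reduce, by the
   2-dimensional uniqueness of the pushout, to those of [l -| d0]. *)


Set Implicit Arguments.

Section Bookkeeping.
Context {A : TwoCat}.

(* Kept opaque below, so that [eauto] treats it as an atomic typing fact. *)
Definition cell2_in (a : cell2 A) (x y : ob A) : Prop := hom1 (dom a) x y.

Lemma hom1_comp (g f : cell1 A) x y z :
  hom1 g y z -> hom1 f x y -> hom1 (comp1 g f) x z.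
Proof.
  intros [Hg1 Hg2] [Hf1 Hf2].
  split; [rewrite src_comp1 | rewrite tgt_comp1]; congruence.
Qed.

Lemma hom1_id (x : ob A) : hom1 (id1 x) x x.
Proof. split; [apply src_id1 | apply tgt_id1]. Qed.

Lemma hom1_composable (h g : cell1 A) x y z :
  hom1 h y z -> hom1 g x y -> src h = tgt g.
Proof. intros [] []; congruence. Qed.

Lemma hom1_src (f : cell1 A) x y : hom1 f x y -> src f = x.
Proof. intros []; assumption. Qed.

Lemma hom1_tgt (f : cell1 A) x y : hom1 f x y -> tgt f = y.
Proof. intros []; assumption. Qed.

Lemma cell2_in_dom a x y : cell2_in a x y -> hom1 (dom a) x y.
Proof. intros H; exact H. Qed.

Lemma cell2_in_hom2 a f g x y : hom2 a f g -> hom1 f x y -> cell2_in a x y.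
Proof. unfold cell2_in; intros [-> _] H; exact H. Qed.

Lemma cell2_in_id2 f x y : hom1 f x y -> cell2_in (id2 f) x y.
Proof. unfold cell2_in; rewrite dom_id2; auto. Qed.

Lemma cell2_in_hcomp b a x y z :
  cell2_in b y z -> cell2_in a x y -> cell2_in (hcomp b a) x z.
Proof.
  unfold cell2_in; intros Hb Ha; rewrite dom_hcomp.
  - eapply hom1_comp; eassumption.
  - eapply hom1_composable; eassumption.
Qed.

End Bookkeeping.

Global Opaque cell2_in.
Global Hint Resolve hom1_comp hom1_id hom1_composable hom1_src hom1_tgt
  cell2_in_dom cell2_in_id2 cell2_in_hcomp : cat.

Section CompositionLaws.
Context {A : TwoCat}.

Lemma comp1_idl (f : cell1 A) y : tgt f = y -> comp1 (id1 y) f = f.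
Proof. intros <-; apply comp1_id_l. Qed.

Lemma comp1_idr (f : cell1 A) x : src f = x -> comp1 f (id1 x) = f.
Proof. intros <-; apply comp1_id_r. Qed.

Lemma comp1_fold (g f h r : cell1 A) :
  src g = tgt f -> src f = tgt h -> comp1 g f = r -> comp1 g (comp1 f h) = comp1 r h.
Proof. intros Hgf Hfh <-; apply comp1_assoc; assumption. Qed.

Lemma hcomp_idl (a : cell2 A) y : tgt (dom a) = y -> hcomp (id2 (id1 y)) a = a.
Proof. intros <-; apply hcomp_id_l. Qed.

Lemma vcomp_idl (a : cell2 A) f : cod a = f -> vcomp (id2 f) a = a.
Proof. intros <-; apply vcomp_id_l. Qed.

Lemma vcomp_idr (a : cell2 A) f : dom a = f -> vcomp a (id2 f) = a.
Proof. intros <-; apply vcomp_id_r. Qed.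

Lemma whisker_l_vcomp h (b a : cell2 A) :
  dom b = cod a -> src h = tgt (dom a) ->
  hcomp (id2 h) (vcomp b a) = vcomp (hcomp (id2 h) b) (hcomp (id2 h) a).
Proof.
  intros Hba Hh.
  transitivity (hcomp (vcomp (id2 h) (id2 h)) (vcomp b a)).
  - f_equal; symmetry; apply vcomp_idl, cod_id2.
  - apply interchange; rewrite ?dom_id2, ?cod_id2; auto.
Qed.

Lemma whisker_r_vcomp h (b a : cell2 A) :
  dom b = cod a -> src (dom a) = tgt h ->
  hcomp (vcomp b a) (id2 h) = vcomp (hcomp b (id2 h)) (hcomp a (id2 h)).
Proof.
  intros Hba Hh.
  transitivity (hcomp (vcomp b a) (vcomp (id2 h) (id2 h))).
  - f_equal; symmetry; apply vcomp_idl, cod_id2.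
  - apply interchange; rewrite ?dom_id2, ?cod_id2; auto.
Qed.

Lemma hcomp_natural (xi a : cell2 A) h h' f f' :
  hom2 xi h h' -> hom2 a f f' -> src h = tgt f ->
  vcomp (hcomp xi (id2 f')) (hcomp (id2 h) a)
  = vcomp (hcomp (id2 h') a) (hcomp xi (id2 f)).
Proof.
  intros [Dxi Cxi] [Da Ca] Hhf.
  assert (Hh'f : src h' = tgt f) by (rewrite <- Cxi, <- src_dom_cod, Dxi; exact Hhf).
  rewrite <- !interchange by (rewrite ?dom_id2, ?cod_id2; congruence).
  rewrite <- Dxi, <- Ca, <- Cxi, <- Da.
  rewrite vcomp_id_r, !vcomp_id_l, vcomp_id_r.
  reflexivity.
Qed.

End CompositionLaws.

Ltac typecheck := solve [eauto 12 with cat].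
Ltac simpl_dom_cod := repeat first
  [ rewrite dom_id2 | rewrite cod_id2
  | rewrite dom_hcomp by typecheck | rewrite cod_hcomp by typecheck ].
Ltac norm_comp1 := repeat first
  [ rewrite <- comp1_assoc by typecheck
  | rewrite comp1_idl by typecheck | rewrite comp1_idr by typecheck ].
Ltac rewrite_dom_cod_hyps := repeat match goal with
  | H : dom ?a = _ |- context [dom ?a] => rewrite H
  | H : cod ?a = _ |- context [cod ?a] => rewrite H
  end.
Ltac rewrite_comp1_hyps := repeat (match goal with
  | H : comp1 ?g ?f = ?r |- context [comp1 ?g (comp1 ?f ?h)] =>
      rewrite (@comp1_fold _ g f h r) by (typecheck || exact H)
  | H : comp1 ?g ?f = ?r |- context [comp1 ?g ?f] => rewrite H
  end; norm_comp1).
(* [cell1_eq] proves 1-cell equations modulo associativity, unit laws and the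
   1-cell equations available as hypotheses. *)
Ltac cell1_eq := repeat progress
  (simpl_dom_cod; rewrite_dom_cod_hyps; norm_comp1; rewrite_comp1_hyps); reflexivity.

Section UniversalProperties.
Context {A : TwoCat}.

Lemma opcomma_cell2_ext (p d0 d1 h h' : cell1 A) e b X y al (xi xi' : cell2 A) :
  hom1 p e b -> is_opcomma p e b X d0 d1 al ->
  hom1 h X y -> hom1 h' X y -> hom2 xi h h' -> hom2 xi' h h' ->
  hcomp xi (id2 d0) = hcomp xi' (id2 d0) ->
  hcomp xi (id2 d1) = hcomp xi' (id2 d1) -> xi = xi'.
Proof.
  intros Hp (Hd0 & Hd1 & [Dal Cal] & Hop) Hh Hh' Hxi Hxi' E0 E1.
  assert (Hxi2 : cell2_in xi X y) by (eapply cell2_in_hom2; eassumption).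
  destruct (proj2 (Hop y) h h' (hcomp xi (id2 d0)) (hcomp xi (id2 d1)))
    as [u [_ Hu]]; try assumption.
  - destruct Hxi as [Dxi Cxi]; split; cell1_eq.
  - destruct Hxi as [Dxi Cxi]; split; cell1_eq.
  - rewrite <- !hcomp_assoc, !hcomp_id2 by typecheck.
    apply hcomp_natural; [assumption | split; assumption | typecheck].
  - assert (Exi : u = xi) by exact (Hu xi (conj Hxi (conj eq_refl eq_refl))).
    assert (Exi' : u = xi') by exact (Hu xi' (conj Hxi' (conj (eq_sym E0) (eq_sym E1)))).
    congruence.
Qed.

Lemma pushout2_cell2_ext (f0 f1 q0 q1 k k' : cell1 A) c c0 c1 P y (xi xi' : cell2 A) :
  hom1 f0 c c0 -> hom1 f1 c c1 -> is_pushout2 c c0 c1 f0 f1 P q0 q1 ->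
  hom1 k P y -> hom1 k' P y -> hom2 xi k k' -> hom2 xi' k k' ->
  hcomp xi (id2 q0) = hcomp xi' (id2 q0) ->
  hcomp xi (id2 q1) = hcomp xi' (id2 q1) -> xi = xi'.
Proof.
  intros Hf0 Hf1 (Hq0 & Hq1 & Hsq & Hpo) Hk Hk' Hxi Hxi' E0 E1.
  assert (Hxi2 : cell2_in xi P y) by (eapply cell2_in_hom2; eassumption).
  destruct (proj2 (Hpo y) k k' (hcomp xi (id2 q0)) (hcomp xi (id2 q1)))
    as [u [_ Hu]]; try assumption.
  - destruct Hxi as [Dxi Cxi]; split; cell1_eq.
  - destruct Hxi as [Dxi Cxi]; split; cell1_eq.
  - rewrite <- !hcomp_assoc, !hcomp_id2, Hsq by typecheck; reflexivity.
  - assert (Exi : u = xi) by exact (Hu xi (conj Hxi (conj eq_refl eq_refl))).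
    assert (Exi' : u = xi') by exact (Hu xi' (conj Hxi' (conj (eq_sym E0) (eq_sym E1)))).
    congruence.
Qed.

Lemma rke_cell2_ext (f g r k : cell1 A) z x y ga (be be' : cell2 A) :
  hom1 g z x -> is_rke z x y f g r ga -> hom1 k x y ->
  hom2 be k r -> hom2 be' k r ->
  vcomp ga (hcomp be (id2 g)) = vcomp ga (hcomp be' (id2 g)) -> be = be'.
Proof.
  intros Hg (_ & [Dga Cga] & Hrk) Hk Hbe Hbe' E.
  assert (Hbe2 : cell2_in be x y) by (eapply cell2_in_hom2; eassumption).
  destruct (Hrk k Hk (vcomp ga (hcomp be (id2 g)))) as [u [_ Hu]].
  - destruct Hbe as [Dbe Cbe].
    assert (Hcomp : dom ga = cod (hcomp be (id2 g))) by cell1_eq.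
    split; [rewrite dom_vcomp | rewrite cod_vcomp]; trivial; cell1_eq.
  - assert (Ebe : u = be) by exact (Hu be (conj Hbe eq_refl)).
    assert (Ebe' : u = be') by exact (Hu be' (conj Hbe' (eq_sym E))).
    congruence.
Qed.

Lemma adjunction_id_counit (l r : cell1 A) x y et :
  is_adjunction x y l r (id2 (id1 y)) et <->
  hom1 l x y /\ hom1 r y x /\ comp1 l r = id1 y /\ hom2 et (id1 x) (comp1 r l) /\
  hcomp (id2 l) et = id2 l /\ hcomp et (id2 r) = id2 r.
Proof.
  enough (Htriangles : hom1 l x y -> hom1 r y x -> comp1 l r = id1 y ->
    hom2 et (id1 x) (comp1 r l) ->
    vcomp (hcomp (id2 (id1 y)) (id2 l)) (hcomp (id2 l) et) = hcomp (id2 l) et /\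
    vcomp (hcomp (id2 r) (id2 (id1 y))) (hcomp et (id2 r)) = hcomp et (id2 r)).
  { unfold is_adjunction; split.
    - intros (Hl & Hr & [Hlr _] & Het & T1 & T2).
      rewrite dom_id2 in Hlr; symmetry in Hlr.
      destruct (Htriangles Hl Hr Hlr Het) as [E1 E2].
      rewrite <- E1, <- E2; tauto.
    - intros (Hl & Hr & Hlr & Het & T1 & T2).
      destruct (Htriangles Hl Hr Hlr Het) as [E1 E2].
      rewrite E1, E2.
      assert (Hcounit : hom2 (id2 (id1 y)) (comp1 l r) (id1 y)).
      { rewrite Hlr; split; [apply dom_id2 | apply cod_id2]. }
      tauto. }
  intros Hl Hr Hlr Het.
  assert (Het2 : cell2_in et x x) by (eapply cell2_in_hom2; [exact Het | typecheck]).
  destruct Het as [Det Cet].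
  split.
  - rewrite hcomp_id2, comp1_idl by typecheck. apply vcomp_idl; cell1_eq.
  - rewrite hcomp_id2, comp1_idr by typecheck. apply vcomp_idl; cell1_eq.
Qed.

End UniversalProperties.

Section OpcommaReflection.
Context {A : TwoCat}.
Variables (e b X : ob A) (p d0 d1 t l : cell1 A) (al ga : cell2 A).
Hypothesis Hp : hom1 p e b.
Hypothesis Hop : is_opcomma p e b X d0 d1 al.
Hypothesis Hrke : is_rke e b b p p t ga.
Hypothesis Hpres : preserves_rke e b b X p p t ga d0.
Hypothesis Hl : hom1 l X b.
Hypothesis Hl0 : comp1 l d0 = id1 b.
Hypothesis Hl1 : comp1 l d1 = t.
Hypothesis Hlal : hcomp (id2 l) al = ga.

Definition factors_alpha (be : cell2 A) : Prop :=
  hom2 be d1 (comp1 d0 t) /\ vcomp (hcomp (id2 d0) ga) (hcomp be (id2 p)) = al.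

Lemma alpha_factor_exists : exists be, factors_alpha be.
Proof.
  destruct Hop as (_ & Hd1 & Hal & _).
  destruct Hpres as (_ & _ & _ & Hrk0).
  destruct (Hrk0 d1 Hd1 al Hal) as [be [Hbe _]].
  exists be; exact Hbe.
Qed.

Lemma whisker_alpha_factor be : factors_alpha be -> hcomp (id2 l) be = id2 t.
Proof.
  intros [[Dbe Cbe] Ebe].
  pose proof Hop as (Hd0 & Hd1 & _).
  pose proof Hrke as (Ht & [Dga Cga] & _).
  assert (Hbe2 : cell2_in be b X) by (eapply cell2_in_hom2; [split; eassumption | eassumption]).
  assert (Hga2 : cell2_in ga e b) by (eapply cell2_in_hom2; [split; eassumption | typecheck]).
  apply (rke_cell2_ext Hp Hrke Ht).
  - split; cell1_eq.
  - split; cell1_eq.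
  - assert (Ewhisk : vcomp ga (hcomp (hcomp (id2 l) be) (id2 p)) = hcomp (id2 l) al).
    { rewrite <- Ebe, whisker_l_vcomp by (cell1_eq || typecheck).
      rewrite hcomp_assoc, hcomp_id2, Hl0, hcomp_idl, hcomp_assoc by typecheck.
      reflexivity. }
    rewrite Ewhisk, Hlal, hcomp_id2 by typecheck.
    symmetry; apply vcomp_idr; exact Dga.
Qed.

Lemma opcomma_unit_exists be : factors_alpha be ->
  exists et, hom2 et (id1 X) (comp1 d0 l) /\
             hcomp et (id2 d0) = id2 d0 /\ hcomp et (id2 d1) = be.
Proof.
  intros [[Dbe Cbe] Ebe].
  pose proof Hop as (Hd0 & Hd1 & [Dal Cal] & Hop').
  destruct (proj2 (Hop' X) (id1 X) (comp1 d0 l) (id2 d0) be)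
    as [et [(Het & Et0 & Et1) _]].
  - typecheck.
  - typecheck.
  - split; cell1_eq.
  - split; cell1_eq.
  - assert (Hal2 : cell2_in al e X) by (eapply cell2_in_hom2; [split; eassumption | typecheck]).
    rewrite hcomp_id2, hcomp_idl, vcomp_idl by (typecheck || exact Cal).
    rewrite <- (hcomp_id2 A d0 l), <- hcomp_assoc, Hlal by typecheck.
    symmetry; exact Ebe.
  - exists et; auto.
Qed.

Lemma reflector_adjunction : exists et, is_adjunction X b l d0 (id2 (id1 b)) et.
Proof.
  pose proof Hop as (Hd0 & Hd1 & _).
  destruct alpha_factor_exists as [be Hbe].
  destruct (opcomma_unit_exists Hbe) as (et & Het & Et0 & Et1).
  assert (Het2 : cell2_in et X X) by (eapply cell2_in_hom2; [eassumption | typecheck]).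
  exists et.
  apply adjunction_id_counit.
  refine (conj Hl (conj Hd0 (conj Hl0 (conj Het (conj _ Et0))))).
  destruct Het as [Det Cet].
  apply (opcomma_cell2_ext Hp Hop Hl Hl).
  - split; cell1_eq.
  - split; cell1_eq.
  - rewrite <- hcomp_assoc, Et0 by typecheck; reflexivity.
  - rewrite <- hcomp_assoc, Et1, (whisker_alpha_factor Hbe), hcomp_id2, Hl1 by typecheck.
    reflexivity.
Qed.

End OpcommaReflection.

Section PushoutExtension.
Context {A : TwoCat}.
Variables (b X P : ob A) (d0 d1 D0 D2 l : cell1 A) (etb : cell2 A).
Hypothesis Hpo : is_pushout2 b X X d0 d1 P D2 D0.
Hypothesis Hd1 : hom1 d1 b X.
Hypothesis Hadj : is_adjunction X b l d0 (id2 (id1 b)) etb.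

Definition unit_along_D2 : cell2 A :=
  vcomp (hcomp (hcomp (id2 D0) etb) (id2 (comp1 d1 l))) (hcomp (id2 D2) etb).

Lemma pushout2_extension_exists :
  exists lb, hom1 lb P b /\ comp1 lb D2 = comp1 (comp1 l d1) l /\ comp1 lb D0 = l.
Proof.
  pose proof (proj1 (adjunction_id_counit _ _ _ _ _) Hadj) as (Hl & Hd0 & Hl0 & _).
  destruct Hpo as (HD2 & HD0 & _ & Hpo').
  destruct (proj1 (Hpo' b) (comp1 (comp1 l d1) l) l) as [lb [Hlb _]];
    [typecheck | typecheck | cell1_eq |].
  exists lb; exact Hlb.
Qed.

Variable lb : cell1 A.
Hypothesis Hlb : hom1 lb P b.
Hypothesis Hlb2 : comp1 lb D2 = comp1 (comp1 l d1) l.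
Hypothesis Hlb0 : comp1 lb D0 = l.

Lemma extended_unit_exists :
  exists etbb, hom2 etbb (id1 P) (comp1 (comp1 D0 d0) lb) /\
               hcomp etbb (id2 D2) = unit_along_D2 /\
               hcomp etbb (id2 D0) = hcomp (id2 D0) etb.
Proof.
  pose proof (proj1 (adjunction_id_counit _ _ _ _ _) Hadj)
    as (Hl & Hd0 & Hl0 & [Detb Cetb] & T1 & T2).
  assert (Hetb2 : cell2_in etb X X) by (eapply cell2_in_hom2; [split; eassumption | typecheck]).
  destruct Hpo as (HD2 & HD0 & Hsq & Hpo').
  assert (Hcomposable :
    dom (hcomp (hcomp (id2 D0) etb) (id2 (comp1 d1 l))) = cod (hcomp (id2 D2) etb))
    by cell1_eq.
  destruct (proj2 (Hpo' P) (id1 P) (comp1 (comp1 D0 d0) lb) unit_along_D2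
              (hcomp (id2 D0) etb)) as [etbb [(Hetbb & Etbb2 & Etbb0) _]].
  - typecheck.
  - typecheck.
  - unfold unit_along_D2.
    split; [rewrite dom_vcomp | rewrite cod_vcomp]; trivial; cell1_eq.
  - split; cell1_eq.
  - unfold unit_along_D2.
    rewrite whisker_r_vcomp by (exact Hcomposable || typecheck).
    rewrite <- (hcomp_assoc A (id2 D2) etb (id2 d0)), T2, hcomp_id2 by typecheck.
    rewrite <- hcomp_assoc, hcomp_id2 by typecheck.
    replace (comp1 (comp1 d1 l) d0) with d1 by cell1_eq.
    apply vcomp_idr; cell1_eq.
  - exists etbb; auto.
Qed.

Variable etbb : cell2 A.
Hypothesis Hetbb : hom2 etbb (id1 P) (comp1 (comp1 D0 d0) lb).
Hypothesis Etbb2 : hcomp etbb (id2 D2) = unit_along_D2.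
Hypothesis Etbb0 : hcomp etbb (id2 D0) = hcomp (id2 D0) etb.

Lemma extended_adjunction :
  is_adjunction P b lb (comp1 D0 d0) (id2 (id1 b)) etbb.
Proof.
  pose proof (proj1 (adjunction_id_counit _ _ _ _ _) Hadj)
    as (Hl & Hd0 & Hl0 & [Detb Cetb] & T1 & T2).
  assert (Hetb2 : cell2_in etb X X) by (eapply cell2_in_hom2; [split; eassumption | typecheck]).
  assert (Hetbb2 : cell2_in etbb P P) by (eapply cell2_in_hom2; [eassumption | typecheck]).
  pose proof Hpo as (HD2 & HD0 & Hsq & _).
  apply adjunction_id_counit.
  refine (conj Hlb (conj _ (conj _ (conj Hetbb (conj _ _))))).
  - typecheck.
  - cell1_eq.
  - destruct Hetbb as [Detbb Cetbb].
    apply (pushout2_cell2_ext Hd0 Hd1 Hpo Hlb Hlb).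
    + split; cell1_eq.
    + split; cell1_eq.
    + rewrite <- hcomp_assoc, Etbb2 by typecheck. unfold unit_along_D2.
      rewrite whisker_l_vcomp by (cell1_eq || typecheck).
      rewrite (hcomp_assoc A (id2 lb) (id2 D2) etb), hcomp_id2, Hlb2 by typecheck.
      assert (Eleft : hcomp (id2 lb) (hcomp (hcomp (id2 D0) etb) (id2 (comp1 d1 l)))
                      = id2 (comp1 (comp1 l d1) l)).
      { rewrite !hcomp_assoc, hcomp_id2, Hlb0, T1, hcomp_id2 by typecheck.
        f_equal; cell1_eq. }
      assert (Eright : hcomp (id2 (comp1 (comp1 l d1) l)) etb
                       = id2 (comp1 (comp1 l d1) l)).
      { rewrite <- (hcomp_id2 A (comp1 l d1) l), <- hcomp_assoc, T1 by typecheck.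
        reflexivity. }
      rewrite Eleft, Eright; apply vcomp_idl, cod_id2.
    + rewrite <- hcomp_assoc, Etbb0 by typecheck.
      rewrite hcomp_assoc, hcomp_id2, Hlb0, T1 by typecheck.
      reflexivity.
  - rewrite <- (hcomp_id2 A D0 d0), hcomp_assoc, Etbb0, <- hcomp_assoc, T2 by typecheck.
    reflexivity.
Qed.

End PushoutExtension.

Theorem proposition4p4 (A : TwoCat) (e b X P : ob A)
    (p d0 d1 D0 D2 t l : cell1 A) (al ga : cell2 A)
    (Hp : hom1 p e b)
    (Hcok : has_cokernel_diagram p e b X d0 d1 al P D0 D2)
    (Hrke : is_rke e b b p p t ga)
    (Hpres : preserves_rke e b b X p p t ga d0)
    (Hl : hom1 l X b /\ comp1 l d0 = id1 b /\ comp1 l d1 = t /\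
          hcomp (id2 l) al = ga) :
  (exists et, is_adjunction X b l d0 (id2 (id1 b)) et) /\
  forall etb, is_adjunction X b l d0 (id2 (id1 b)) etb ->
    exists lb etbb,
      is_adjunction P b lb (comp1 D0 d0) (id2 (id1 b)) etbb /\
      comp1 lb D2 = comp1 t l /\
      comp1 lb D0 = l /\
      hcomp etbb (id2 D0) = hcomp (id2 D0) etb /\
      hcomp etbb (id2 D2) =
        vcomp (hcomp (hcomp (id2 D0) etb) (id2 (comp1 d1 l)))
              (hcomp (id2 D2) etb).
Proof.
  destruct Hcok as [Hop Hpo].
  destruct Hl as (Hl & Hl0 & Hl1 & Hlal).
  pose proof Hop as (_ & Hd1 & _).
  split.
  - exact (reflector_adjunction Hp Hop Hrke Hpres Hl Hl0 Hl1 Hlal).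
  - intros etb Hetb.
    rewrite <- Hl1.
    destruct (pushout2_extension_exists Hpo Hd1 Hetb) as (lb & Hlb & Hlb2 & Hlb0).
    destruct (extended_unit_exists Hpo Hd1 Hetb Hlb Hlb2 Hlb0)
      as (etbb & Hetbb & Etbb2 & Etbb0).
    exists lb, etbb.
    exact (conj (extended_adjunction Hpo Hd1 Hetb Hlb Hlb2 Hlb0 Hetbb Etbb2 Etbb0)
                (conj Hlb2 (conj Hlb0 (conj Etbb0 Etbb2)))).
Qed.
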